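(* Let $(K,v)$ be a valued field whose value group $\Gamma$ is dense and regular. If $(K,v)$ is extremal, then $\Gamma$ is divisible.
   Context: $(K,v)$ with valuation ring $\mathcal{O}_v$ and value group $\Gamma$ (and $v(0)=\infty$) is extremal if for every $n\ge1$ and every $F\in K[X_1,\dots,X_n]$ the set $\{v(F(a_1,\dots,a_n)) : a_i\in\mathcal{O}_v\}\subseteq\Gamma\cup\{\infty\}$ has a maximal element. An ordered group is dense if between any two distinct elements there is a third; it is regular if for every $n\ge1$ every open interval containing at least $n$ elements contains an $n$-divisible element. *)

From HB Require Import structures.
From mathcomp Require Import all_boot all_order all_algebra.
Set Implicit Arguments. Unset Strict Implicit. Unset Printing Implicit Defensive.
Import GRing.Theory.
Local Open Scope ring_scope.

Definition ordered_abelian_group (G : zmodType) (le : rel G) : Prop :=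
  [/\ reflexive le, antisymmetric le, transitive le, total le &
      forall x y z : G, le x y -> le (x + z) (y + z)].

Definition ltg (G : zmodType) (le : rel G) (x y : G) : bool := le x y && (x != y).

Definition dense_group (G : zmodType) (le : rel G) : Prop :=
  forall x y : G, ltg le x y -> exists z, ltg le x z && ltg le z y.

Definition regular_group (G : zmodType) (le : rel G) : Prop :=
  forall (n : nat) (a b : G), (0 < n)%N ->
    (exists s : seq G, [/\ uniq s, (n <= size s)%N &
                           all (fun z => ltg le a z && ltg le z b) s]) ->
    exists z w : G, [/\ ltg le a z, ltg le z b & z = w *+ n].

Definition divisible_group (G : zmodType) : Prop :=
  forall (n : nat) (g : G), (0 < n)%N -> exists h : G, h *+ n = g.

(* ---------- Gamma u {oo}, with oo represented by None ---------- *)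
Definition leo (G : zmodType) (le : rel G) (a b : option G) : bool :=
  match b with
  | None => true
  | Some y => match a with None => false | Some x => le x y end
  end.

Definition addo (G : zmodType) (a b : option G) : option G :=
  match a, b with Some x, Some y => Some (x + y) | _, _ => None end.

Definition is_valuation (K : fieldType) (G : zmodType) (le : rel G)
    (v : K -> option G) : Prop :=
  [/\ forall x : K, v x = None <-> x = 0,
      forall x y : K, v (x * y) = addo (v x) (v y),
      forall x y : K, leo le (v x) (v (x + y)) || leo le (v y) (v (x + y)) &
      forall g : G, exists x : K, v x = Some g].

Definition in_valring (K : fieldType) (G : zmodType) (le : rel G)
    (v : K -> option G) (x : K) : Prop := leo le (Some 0) (v x).

(* Formal polynomial expressions over K in the variables X_0..X_{n-1};
   they denote exactly the elements of K[X_1,...,X_n]. *)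
Inductive mpterm (K : Type) (n : nat) : Type :=
| MPVar of 'I_n
| MPConst of K
| MPAdd of mpterm K n & mpterm K n
| MPMul of mpterm K n & mpterm K n.

Fixpoint mpeval (K : fieldType) (n : nat) (a : 'I_n -> K) (F : mpterm K n) : K :=
  match F with
  | MPVar i => a i
  | MPConst c => c
  | MPAdd F1 F2 => mpeval a F1 + mpeval a F2
  | MPMul F1 F2 => mpeval a F1 * mpeval a F2
  end.

Definition extremal (K : fieldType) (G : zmodType) (le : rel G)
    (v : K -> option G) : Prop :=
  forall (n : nat) (F : mpterm K n), (0 < n)%N ->
    exists a : 'I_n -> K,
      (forall i, in_valring le v (a i)) /\
      forall b : 'I_n -> K, (forall i, in_valring le v (b i)) ->
        leo le (v (mpeval b F)) (v (mpeval a F)).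

From mathcomp Require Import all_boot all_order all_algebra.
From Stdlib Require Import Classical.

(* Suppose 0 < g in Gamma is not divisible by n, put N = 2n and pick d, e in K
   with v(d) = g and v(e) = 2g - 2Ng.  The three summands of
     F(X, Y) = e (XY - d)^N + X^N + d Y^N
   take their values in the cosets 2g + N Gamma, N Gamma and g + N Gamma, which are
   pairwise distinct, so v(F) is the least of the three values.  This forces
   2 v(F(a, b)) < (N + 1) g for all a, b in K.  Conversely, density and
   regularity give 0 < p in Gamma with 2Np just below (N + 1) g; at (a, d/a)
   with v(a) = p the first summand vanishes and v(F) exceeds any prescribed
   value below (N + 1) g / 2.  So v o F has no maximum on O_v^2. *)

Set Implicit Arguments. Unset Strict Implicit. Unset Printing Implicit Defensive.
Import GRing.Theory.
Local Open Scope ring_scope.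

Section OrderedGroup.
Variables (G : zmodType) (le : rel G).
Hypothesis leG : ordered_abelian_group le.
Local Notation lt := (ltg le).
Implicit Types x y z : G.

Lemma le_refl x : le x x. Proof. by case: leG. Qed.

Lemma le_anti x y : le x y -> le y x -> x = y.
Proof. by case: leG => _ anti _ _ _ xy yx; apply: anti; rewrite xy yx. Qed.

Lemma le_trans y x z : le x y -> le y z -> le x z.
Proof. by case: leG => _ _ trans _ _; apply: trans. Qed.

Lemma le_total x y : le x y || le y x.
Proof. by case: leG => _ _ _ total _; apply: total. Qed.

Lemma leD2r z x y : le (x + z) (y + z) = le x y.
Proof.
case: leG => _ _ _ _ mono; apply/idP/idP; last exact: mono.
by move/(mono _ _ (- z)); rewrite !addrK.
Qed.

Lemma leD2l z x y : le (z + x) (z + y) = le x y.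
Proof. by rewrite ![z + _]addrC leD2r. Qed.

Lemma ltNge x y : lt x y = ~~ le y x.
Proof.
rewrite /ltg; have [->|neq] := eqVneq x y; first by rewrite le_refl andbF.
rewrite andbT; apply/idP/negP => [xy yx|nyx]; first by rewrite (le_anti xy yx) eqxx in neq.
by case/orP: (le_total x y) => // yx; case: nyx.
Qed.

Lemma ltW x y : lt x y -> le x y. Proof. by case/andP. Qed.

Lemma lt_le_trans y x z : lt x y -> le y z -> lt x z.
Proof.
rewrite !ltNge => yx yz; apply/negP => zx.
by case/negP: yx; apply: le_trans yz zx.
Qed.

Lemma le_lt_trans y x z : le x y -> lt y z -> lt x z.
Proof.
rewrite !ltNge => xy zy; apply/negP => zx.
by case/negP: zy; apply: le_trans zx xy.
Qed.

Lemma lt_trans y x z : lt x y -> lt y z -> lt x z.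
Proof. by move=> xy /ltW; apply: lt_le_trans. Qed.

Lemma ltD2r z x y : lt (x + z) (y + z) = lt x y.
Proof. by rewrite !ltNge leD2r. Qed.

Lemma ltD2l z x y : lt (z + x) (z + y) = lt x y.
Proof. by rewrite !ltNge leD2l. Qed.

Lemma leD x y z t : le x y -> le z t -> le (x + z) (y + t).
Proof. by move=> xy zt; apply: (@le_trans (y + z)); rewrite ?leD2r ?leD2l. Qed.

Lemma lt_leD x y z t : lt x y -> le z t -> lt (x + z) (y + t).
Proof. by move=> xy zt; apply: (@lt_le_trans (y + z)); rewrite ?ltD2r ?leD2l. Qed.

Lemma leMn k x y : le x y -> le (x *+ k) (y *+ k).
Proof.
move=> xy; elim: k => [|k IH]; first by rewrite !mulr0n le_refl.
by rewrite !mulrS leD.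
Qed.

Lemma leMn2r k x y : (0 < k)%N -> le (x *+ k) (y *+ k) = le x y.
Proof.
case: k => // k _; apply/idP/idP; last exact: leMn.
apply: contraTT; rewrite -!ltNge => yx.
by rewrite !mulrS lt_leD // leMn // ltW.
Qed.

Lemma ltMn2r k x y : (0 < k)%N -> lt (x *+ k) (y *+ k) = lt x y.
Proof. by move=> k_gt0; rewrite !ltNge leMn2r. Qed.

Lemma mulrIn k : (0 < k)%N -> injective (fun x => x *+ k).
Proof.
by move=> k_gt0 x y /= xy; apply: le_anti; rewrite -(leMn2r _ _ k_gt0) xy le_refl.
Qed.

Lemma le_pMn2l x m n : le 0 x -> (m <= n)%N -> le (x *+ m) (x *+ n).
Proof.
move=> x_ge0 /subnKC <-; rewrite mulrnDr -{1}[x *+ m]addr0 leD2l.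
by rewrite -(mul0rn G (n - m)) leMn.
Qed.

Lemma lt0_or_oppr_gt0 x : x != 0 -> lt 0 x \/ lt 0 (- x).
Proof.
move=> x_neq0; case/orP: (le_total 0 x) => x0; [left|right].
  by rewrite /ltg x0 eq_sym.
by rewrite /ltg -(leD2r x) add0r addNr x0 eq_sym oppr_eq0.
Qed.

End OrderedGroup.

Section DenseRegular.
Variables (G : zmodType) (le : rel G).
Hypotheses (leG : ordered_abelian_group le) (denseG : dense_group le).
Hypothesis regG : regular_group le.
Local Notation lt := (ltg le).

Lemma dense_interval_large k a b : lt a b ->
  exists s : seq G, [/\ uniq s, (k <= size s)%N & all (fun z => lt a z && lt z b) s].
Proof.
elim: k b => [|k IH] b ab; first by exists [::].
have [c /andP[ac cb]] := denseG ab.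
have [s [us ks sac]] := IH c ac.
exists (c :: s); split => /=.
- rewrite us andbT; apply/negP => /(allP sac)/andP[_].
  by rewrite /ltg eqxx andbF.
- by rewrite ltnS.
- rewrite ac cb; apply/allP => z /(allP sac)/andP[az zc].
  by rewrite az (lt_trans leG zc cb).
Qed.

Lemma dense_regular_multiple k a b : (0 < k)%N -> lt a b ->
  exists2 w, lt a (w *+ k) & lt (w *+ k) b.
Proof.
move=> k_gt0 ab.
have [z [w [az zb zw]]] := regG k_gt0 (dense_interval_large k ab).
by exists w; rewrite -zw.
Qed.

End DenseRegular.

Section Valuation.
Variables (K : fieldType) (G : zmodType) (le : rel G) (v : K -> option G).
Hypotheses (leG : ordered_abelian_group le) (vK : is_valuation le v).
Local Notation lt := (ltg le).

Lemma v_eqNone x : v x = None <-> x = 0. Proof. by case: vK. Qed.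

Lemma vM x y : v (x * y) = addo (v x) (v y). Proof. by case: vK. Qed.

Lemma v_ultra x y : leo le (v x) (v (x + y)) || leo le (v y) (v (x + y)).
Proof. by case: vK. Qed.

Lemma v_surj p : exists x, v x = Some p. Proof. by case: vK. Qed.

Lemma v0 : v 0 = None. Proof. exact/v_eqNone. Qed.

Lemma v_neq0 x : x != 0 -> exists p, v x = Some p.
Proof.
case vx: (v x) => [p|]; first by exists p.
by rewrite (proj1 (v_eqNone x) vx) eqxx.
Qed.

Lemma v1 : v 1 = Some 0.
Proof.
have [p v1p] := v_neq0 (oner_neq0 K).
have := vM 1 1; rewrite mulr1 v1p => -[p0].
by congr Some; apply: (addrI p); rewrite addr0 -p0.
Qed.

Lemma vN x : v (- x) = v x.
Proof.
have vN1 : v (-1) = Some 0.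
  have [p vN1p] : exists p, v (-1) = Some p.
    by apply: v_neq0; rewrite oppr_eq0 oner_neq0.
  have := vM (-1) (-1); rewrite mulrNN mulr1 v1 vN1p => -[p0].
  by congr Some; apply: (mulrIn leG (isT : 0 < 2)%N); rewrite /= mulr2n -p0 mul0rn.
by rewrite -mulN1r vM vN1; case: (v x) => //= p; rewrite add0r.
Qed.

Lemma vX x p k : v x = Some p -> v (x ^+ k) = Some (p *+ k).
Proof.
move=> vx; elim: k => [|k IH]; first by rewrite expr0 v1 mulr0n.
by rewrite exprS vM vx IH /= mulrS.
Qed.

Lemma v_add_lt x y p q : v x = Some p -> v y = Some q -> lt p q -> v (x + y) = Some p.
Proof.
move=> vx vy; rewrite (ltNge leG) => /negbTE qp.
have := v_ultra (x + y) (- y); rewrite addrK vN vx vy /= qp orbF.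
case vxy: (v (x + y)) => [r|] //= rp.
have := v_ultra x y; rewrite vx vy vxy /= => /orP[pr|qr].
  by rewrite (le_anti leG rp pr).
by rewrite (le_trans leG qr rp) in qp.
Qed.

Lemma v_add_min x y p q : v x = Some p -> v y = Some q -> p != q ->
  (v (x + y) = Some p /\ lt p q) \/ (v (x + y) = Some q /\ lt q p).
Proof.
move=> vx vy pq; case/orP: (le_total leG p q) => [le_pq|le_qp].
  have lt_pq : lt p q by rewrite /ltg le_pq.
  by left; rewrite (v_add_lt vx vy).
have lt_qp : lt q p by rewrite /ltg le_qp eq_sym.
by right; rewrite addrC (v_add_lt vy vx).
Qed.

Lemma v_add_le x y p : v x = Some p -> v y != Some p ->
  exists2 r, v (x + y) = Some r & le r p.
Proof.
move=> vx; case vy: (v y) => [q|] qp.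
  have pq : p != q by apply: (contraNneq _ qp) => ->.
  have [[-> _]|[-> /ltW]] := v_add_min vx vy pq; last by exists q.
  by exists p; rewrite ?(le_refl leG).
by exists p; rewrite ?(le_refl leG) // (proj1 (v_eqNone y) vy) addr0.
Qed.

Lemma v_add_gt x y p q w : v x = Some p -> v y = Some q -> lt w p -> lt w q ->
  ~~ leo le (v (x + y)) (Some w).
Proof.
move=> vx vy wp wq; case vxy: (v (x + y)) => [r|] //=; rewrite -(ltNge leG).
have := v_ultra x y; rewrite vx vy vxy /= => /orP[pr|qr].
  exact: lt_le_trans wp pr.
exact: lt_le_trans wq qr.
Qed.

End Valuation.

Fixpoint mpexp (K : fieldType) (n : nat) (t : mpterm K n) (k : nat) : mpterm K n :=
  if k is k'.+1 then MPMul t (mpexp t k') else @MPConst K n 1.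

Lemma mpeval_exp (K : fieldType) (n : nat) (a : 'I_n -> K) (t : mpterm K n) k :
  mpeval a (mpexp t k) = mpeval a t ^+ k.
Proof. by elim: k => //= k ->; rewrite exprS. Qed.

Section NonDivisibleValue.
Variables (K : fieldType) (G : zmodType) (le : rel G) (v : K -> option G).
Hypotheses (leG : ordered_abelian_group le) (vK : is_valuation le v).
Local Notation lt := (ltg le).
Variables (n : nat) (g : G).
Hypotheses (n_gt0 : (0 < n)%N) (g_gt0 : lt 0 g) (g_ndiv : forall h, g != h *+ n).

(* Doubling n keeps both g and 2g outside N Gamma. *)
Local Notation N := (2 * n)%N.
Let eps := g *+ 2 - g *+ 2 *+ N.
Let U := g *+ N.+1.

Variables d e : K.
Hypotheses (vd : v d = Some g) (ve : v e = Some eps).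

Let F a b := e * (a * b - d) ^+ N + (a ^+ N + d * b ^+ N).

Lemma N_ge2 : (2 <= N)%N. Proof. exact: leq_pmulr. Qed.

Lemma exprN0 : (0 : K) ^+ N = 0.
Proof. by rewrite expr0n muln_eq0 /= eqn0Ngt n_gt0. Qed.

Lemma g_notin_NG h : g != h *+ N.
Proof. by rewrite mulrnA g_ndiv. Qed.

Lemma g2_notin_NG h : g *+ 2 != h *+ N.
Proof.
apply/eqP; rewrite mulnC mulrnA => /(mulrIn leG (isT : 0 < 2)%N)/eqP.
by apply/negP; apply: g_ndiv.
Qed.

(* Xval, Yval, Zval are the values p N, g + q N, eps + r N of the summands
   X^N, d Y^N and e Z^N of F, where Z = XY - d. *)
Lemma Xval_neq_Yval p q : p *+ N != g + q *+ N.
Proof.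
by apply: (contraNneq _ (g_notin_NG (p - q))) => E; rewrite mulrnBl E addrK.
Qed.

Lemma Zval_neq_Xval r p : eps + r *+ N != p *+ N.
Proof.
apply: (contraNneq _ (g2_notin_NG (p - r + g *+ 2))) => E.
by rewrite mulrnDl mulrnBl -E /eps addrK subrK.
Qed.

Lemma Zval_neq_Yval r q : eps + r *+ N != g + q *+ N.
Proof.
apply: (contraNneq _ (g_notin_NG (q - r + g *+ 2))) => E.
by rewrite mulrnDl mulrnBl -(addKr g (q *+ N)) -E addrA addrK /eps addrA subrK mulr2n addKr.
Qed.

Lemma v_dYN b q : v b = Some q -> v (d * b ^+ N) = Some (g + q *+ N).
Proof. by move=> vb; rewrite (vM vK) vd (vX vK N vb). Qed.

Lemma v_eZN c r : v c = Some r -> v (e * c ^+ N) = Some (eps + r *+ N).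
Proof. by move=> vc; rewrite (vM vK) ve (vX vK N vc). Qed.

Lemma v_powsum_neq a b r : v (a ^+ N + d * b ^+ N) != Some (eps + r *+ N).
Proof.
have [->|/(v_neq0 vK)[p vp]] := eqVneq a 0; rewrite ?exprN0 ?add0r;
  have [->|/(v_neq0 vK)[q vq]] := eqVneq b 0; rewrite ?exprN0 ?mulr0 ?addr0.
- by rewrite (v0 vK).
- by rewrite (v_dYN vq) /= eq_sym Zval_neq_Yval.
- by rewrite (vX vK N vp) /= eq_sym Zval_neq_Xval.
have [[-> _]|[-> _]] := v_add_min leG vK (vX vK N vp) (v_dYN vq) (Xval_neq_Yval p q).
  by rewrite /= eq_sym Zval_neq_Xval.
by rewrite /= eq_sym Zval_neq_Yval.
Qed.

Lemma U_gt0 : lt 0 U.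
Proof. by rewrite /U -(mul0rn G N.+1) (ltMn2r leG). Qed.

Lemma eps_le0 : le (eps + g *+ N) 0.
Proof.
rewrite -(leD2r leG (g *+ 2 *+ N)) add0r /eps addrAC subrK -mulrnDr -mulrnA.
by rewrite (le_pMn2l leG) ?(ltW g_gt0) // (mulSn 1 N) mul1n leq_add2r N_ge2.
Qed.

Lemma v_F_small a b : exists2 w, v (F a b) = Some w & lt (w *+ 2) U.
Proof.
have near_d : v (a * b - d) = Some g -> exists2 w, v (F a b) = Some w & lt (w *+ 2) U.
  move=> vabd; have [w vF w_le] := v_add_le leG vK (v_eZN vabd) (v_powsum_neq a b g).
  exists w => //; apply: (le_lt_trans leG _ U_gt0).
  by rewrite -(mul0rn G 2) (leMn2r leG) // (le_trans leG w_le eps_le0).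
have [a0|a_neq0] := eqVneq a 0; first by apply: near_d; rewrite a0 mul0r sub0r (vN leG vK).
have [b0|b_neq0] := eqVneq b 0; first by apply: near_d; rewrite b0 mulr0 sub0r (vN leG vK).
have [p vp] := v_neq0 vK a_neq0; have [q vq] := v_neq0 vK b_neq0.
have [pq_le|] := boolP (le (p + q) g); last first.
  rewrite -(ltNge leG) => g_lt; apply: near_d; rewrite addrC.
  by apply: (v_add_lt leG vK _ _ g_lt); rewrite ?(vN leG vK) // (vM vK) vp vq.
have sum_le : le (p *+ N + (g + q *+ N)) U.
  by rewrite addrCA -mulrnDl /U mulrS (leD2l leG) (leMn leG).
have [s vs s2_lt] : exists2 s, v (a ^+ N + d * b ^+ N) = Some s & lt (s *+ 2) U.
  have [[vs lt_s]|[vs lt_s]] :=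
    v_add_min leG vK (vX vK N vp) (v_dYN vq) (Xval_neq_Yval p q);
    [exists (p *+ N) | exists (g + q *+ N)] => //;
    rewrite mulr2n; apply: (lt_le_trans leG _ sum_le).
    by rewrite (ltD2l leG).
  by rewrite (ltD2r leG).
have T3_neq : v (e * (a * b - d) ^+ N) != Some s.
  case vabd: (v (a * b - d)) => [r|]; first by rewrite (v_eZN vabd) -vs eq_sym v_powsum_neq.
  by rewrite (proj1 (v_eqNone vK _) vabd) exprN0 mulr0 (v0 vK).
have [w vF w_le] := v_add_le leG vK vs T3_neq.
exists w; first by rewrite /F addrC.
by apply: (le_lt_trans leG _ s2_lt); apply: leMn.
Qed.

Hypotheses (denseG : dense_group le) (regG : regular_group le).

Lemma v_F_exceeds w : lt (w *+ 2) U -> exists a b,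
  [/\ in_valring le v a, in_valring le v b & ~~ leo le (v (F a b)) (Some w)].
Proof.
move=> wU.
have [L [L_ge0 wL LU]] : exists L, [/\ le 0 L, le (w *+ 2) L & lt L U].
  case/orP: (le_total leG 0 (w *+ 2)) => w0.
    by exists (w *+ 2); rewrite (le_refl leG).
  by exists 0; rewrite (le_refl leG) U_gt0.
have N2_gt0 : (0 < N * 2)%N by rewrite muln_gt0 (leq_trans _ N_ge2).
have [p Lp pU] := dense_regular_multiple leG denseG regG N2_gt0 LU.
have p_gt0 : lt 0 p.
  by rewrite -(ltMn2r leG _ _ N2_gt0) mul0rn (le_lt_trans leG L_ge0 Lp).
have p_lt_g : lt p g.
  rewrite -(ltMn2r leG _ _ N2_gt0) (lt_le_trans leG pU) // (le_pMn2l leG) ?(ltW g_gt0) //.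
  by rewrite muln2 -addnn -addn1 leq_add2l (leq_trans _ N_ge2).
rewrite mulrnA in Lp pU.
have w_lt : lt w (p *+ N) by rewrite -(ltMn2r leG _ _ (isT : 0 < 2)%N) (le_lt_trans leG wL).
have [a va] := v_surj vK p.
have a_neq0 : a != 0 by apply/eqP => a0; move: va; rewrite a0 (v0 vK).
have [q [vb pq]] : exists q, v (d / a) = Some q /\ p + q = g.
  have := vM vK a (d / a); rewrite (mulrC a) divfK // vd va.
  by case: (v (d / a)) => [q [gpq]|//]; exists q.
exists a, (d / a); split.
- by rewrite /in_valring va /= (ltW p_gt0).
- by rewrite /in_valring vb /= -(leD2l leG p) addr0 pq (ltW p_lt_g).
have -> : F a (d / a) = a ^+ N + d * (d / a) ^+ N.
  by rewrite /F (mulrC a) divfK // subrr exprN0 mulr0 add0r.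
apply: (v_add_gt leG vK (vX vK N va) (v_dYN vb) w_lt (lt_trans leG w_lt _)).
rewrite -(ltD2l leG (p *+ N)) -mulr2n (lt_le_trans leG pU) //.
by rewrite /U mulrS -{2}pq mulrnDl addrCA (le_refl leG).
Qed.

Lemma not_extremal : ~ extremal le v.
Proof.
move=> extK.
have [FT FT_eval] : exists FT : mpterm K 2, forall a, mpeval a FT = F (a ord0) (a ord_max).
  pose X := MPVar K (ord0 : 'I_2); pose Y := MPVar K (ord_max : 'I_2).
  pose C c := @MPConst K 2 c.
  exists (MPAdd (MPMul (C e) (mpexp (MPAdd (MPMul X Y) (C (- d))) N))
                (MPAdd (mpexp X N) (MPMul (C d) (mpexp Y N)))) => a.
  by rewrite /= !mpeval_exp.
have [a [aO a_max]] := extK 2 FT isT.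
have [w vFa wU] := v_F_small (a ord0) (a ord_max).
have [b1 [b2 [b1O b2O vFb]]] := v_F_exceeds wU.
pose b (i : 'I_2) := if val i == 0%N then b1 else b2.
have bO i : in_valring le v (b i) by rewrite /b; case: ifP.
by have := a_max b bO; rewrite !FT_eval vFa; apply/negP.
Qed.
End NonDivisibleValue.

Theorem proposition3p4 (K : fieldType) (G : zmodType) (le : rel G)
    (v : K -> option G) :
  ordered_abelian_group le -> is_valuation le v ->
  dense_group le -> regular_group le ->
  extremal le v -> divisible_group G.
Proof.
move=> leG vK denseG regG extK k x k_gt0.
have pos_div y : ltg le 0 y -> exists h, h *+ k = y.
  move=> y_gt0; apply: NNPP => y_ndiv.
  have [d vd] := v_surj vK y.
  have [e ve] := v_surj vK (y *+ 2 - y *+ 2 *+ (2 * k)).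
  apply: (not_extremal leG vK k_gt0 y_gt0 _ vd ve denseG regG extK) => h.
  by apply/eqP => yh; apply: y_ndiv; exists h.
have [->|/(lt0_or_oppr_gt0 leG)[/pos_div //|/pos_div[h hx]]] := eqVneq x 0.
  by exists 0; rewrite mul0rn.
by exists (- h); rewrite mulNrn hx opprK.
Qed.
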